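(* Let $D$ be any reduced divisor on $\mathbb P^1$. Then every vector bundle $E$ on $\mathbb P^1$ with $H^1(\mathbb P^1,E)=0$ is regular relative to $D$.
   Context: A vector bundle $E$ on a smooth curve $C$ is regular relative to a reduced divisor $D$ on $C$ if $H^1(C,E)=0$ and, for any distinct points $p_1,\dots,p_k\in D$ and general $1$-dimensional quotients $U_i$ of the fibres $E_{p_i}$, the natural map $H^0(C,E)\to\bigoplus_{i=1}^k U_i$ has maximal rank. *)

From HB Require Import structures.
From mathcomp Require Import all_boot all_order all_algebra all_field.
From mathcomp Require Import fraction mpoly.
Set Implicit Arguments. Unset Strict Implicit. Unset Printing Implicit Defensive.
Import GRing.Theory.
Local Notation tofrac := (@FracField.tofrac _).
Local Notation "x %:F" := (tofrac x).
Local Open Scope ring_scope.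

Section P1.
Variable K : fieldType.

(* k(t), the function field of P^1; U0 = Spec k[t], U1 = Spec k[u], u = 1/t. *)
Definition RF := {fraction {poly K}}.
Definition tvar : RF := ('X : {poly K})%:F.

(* elements of k[t, t^-1] = O(U0 ∩ U1) *)
Definition laurent (f : RF) : Prop :=
  exists (p : {poly K}) (n : nat), f = p%:F / tvar ^+ n.

(* regular functions on U0 (polynomials in t) and on U1 (polynomials in u = 1/t),
   restricted to the overlap *)
Definition emb0 (p : {poly K}) : RF := p%:F.
Definition emb1 (p : {poly K}) : RF := (map_poly (fun c : K => c%:P%:F) p).[tvar^-1].

(* A vector bundle of rank rk on P^1: trivial on U0 and U1, glued by a transition
   matrix g in GL_rk(k[t,t^-1]); a section is (s0, s1) with s0 = g s1 on U0 ∩ U1. *)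
Record bundle := Bundle {
  rk : nat;
  trans : 'M[RF]_rk;
  trans_unit : trans \in unitmx;
  trans_laurent : forall i j, laurent (trans i j);
  trans_inv_laurent : forall i j, laurent (invmx trans i j) }.

Definition is_section (E : bundle) (s0 s1 : 'cV[{poly K}]_(rk E)) : Prop :=
  map_mx emb0 s0 = trans E *m map_mx emb1 s1.

(* Čech H^1 for the cover {U0, U1}: cokernel of (a, b) |-> a - g b *)
Definition H1_vanishes (E : bundle) : Prop :=
  forall v : 'cV[RF]_(rk E), (forall i, laurent (v i 0)) ->
    exists a b : 'cV[{poly K}]_(rk E), v = map_mx emb0 a - trans E *m map_mx emb1 b.

(* Points of P^1(K): Some c is t = c (in U0), None is the point at infinity u = 0 (in U1).
   The fibre E_p is identified with K^rk via the chart trivialization. *)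
Definition fibre_eval (E : bundle) (p : option K) (s0 s1 : 'cV[{poly K}]_(rk E))
  : 'cV[K]_(rk E) :=
  match p with
  | Some c => map_mx (fun q => q.[c]) s0
  | None => map_mx (fun q => q.[0]) s1
  end.

(* The map H^0(E) -> ⊕_i U_i, where U_i = E_{p_i} / ker (row i Phi) ≅ K via row i Phi. *)
Definition quot_map (E : bundle) (m : nat) (ps : m.-tuple (option K))
  (Phi : 'M[K]_(m, rk E)) (s0 s1 : 'cV[{poly K}]_(rk E)) : 'cV[K]_m :=
  \col_i (row i Phi *m fibre_eval (tnth ps i) s0 s1) 0 0.

(* maximal rank (between finite-dimensional spaces) = injective or surjective *)
Definition max_rank_on_sections (E : bundle) (m : nat) (ps : m.-tuple (option K))
  (Phi : 'M[K]_(m, rk E)) : Prop :=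
  (forall s0 s1 t0 t1, is_section s0 s1 -> is_section t0 t1 ->
      quot_map ps Phi s0 s1 = quot_map ps Phi t0 t1 -> s0 = t0 /\ s1 = t1)
  \/ (forall w : 'cV[K]_m, exists s0 s1, is_section s0 s1 /\ quot_map ps Phi s0 s1 = w).

(* E is regular relative to the reduced divisor D (a duplicate-free list of points):
   H^1(E) = 0, and for all distinct p_1..p_m in D, for general 1-dimensional quotients
   (i.e. for all Phi outside a proper Zariski-closed subset {F = 0} of the space of
   tuples of functionals) the map has maximal rank. *)
Definition regular_rel (E : bundle) (D : seq (option K)) : Prop :=
  H1_vanishes E /\
  forall (m : nat) (ps : m.-tuple (option K)), uniq ps -> {subset ps <= D} ->
    exists F : {mpoly K[m * rk E]}, F != 0 /\
      forall Phi : 'M[K]_(m, rk E),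
        (forall i, row i Phi != 0) ->
        F.@[fun j => mxvec Phi 0 j] != 0 ->
        max_rank_on_sections ps Phi.

End P1.

From HB Require Import structures.
From mathcomp Require Import all_boot all_order all_algebra all_field.
From mathcomp Require Import fraction mpoly.
From mathcomp Require Import zify.
From Stdlib Require Import Classical.
Set Implicit Arguments. Unset Strict Implicit. Unset Printing Implicit Defensive.
Import GRing.Theory.
Local Open Scope ring_scope.
Local Notation tofrac := (@FracField.tofrac _).
Local Notation "x %:F" := (tofrac x).

(* Only the distinctness of the points matters, and H^1(E) = 0 only provides
   the first half of regularity: for every bundle on P^1 the evaluation
   conditions can be imposed greedily.  Choose functionals phi_j and sections
   S_j one point at a time, with phi_i(S_j(p_i)) = 0 for i < j and
   phi_j(S_j(p_j)) <> 0.  A nonzero section satisfying the conditions at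
   p_0, ..., p_(j-1) can be made nonvanishing at p_j by repeatedly multiplying
   it by a rational function with a single pole at p_j and its zero at another
   point; each step lowers the degree.  The construction stops with k = m, or
   when only the zero section satisfies the first k conditions, in which case
   S_0, ..., S_(k-1) span H^0(E).  The k x k matrix (Phi_i(S_j(p_i))) depends
   polynomially on the quotients Phi and is triangular with nonzero diagonal at
   Phi = phi, so its determinant F is a nonzero polynomial; where F does not
   vanish the map H^0(E) -> U_0 + ... + U_(m-1) is surjective (k = m) or
   injective (the S_j span). *)

HB.instance Definition _ (K : fieldType) :=
  GRing.RMorphism.copy (@emb0 K) (tofrac : {rmorphism {poly K} -> RF K}).
HB.instance Definition _ (K : fieldType) :=
  GRing.RMorphism.copy (@emb1 K)
    (horner_eval (tvar K)^-1 \o map_poly (tofrac \o polyC : {rmorphism K -> RF K})).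

Section Chart.
Variable K : fieldType.
Local Notation t := (tvar K).
Implicit Types (p q : {poly K}) (N : nat).

Lemma tvar_neq0 : t != 0.
Proof. by rewrite tofrac_eq0 polyX_eq0. Qed.

Lemma tvarXn_neq0 n : t ^+ n != 0.
Proof. exact: expf_neq0 tvar_neq0. Qed.

Lemma emb0_eq0 p : (emb0 p == 0) = (p == 0).
Proof. exact: tofrac_eq0. Qed.

Lemma emb0_inj : injective (@emb0 K).
Proof. by move=> p q /eqP; rewrite tofrac_eq => /eqP. Qed.

Lemma emb0X : emb0 ('X : {poly K}) = t.
Proof. by []. Qed.

Lemma emb1E q :
  emb1 q = (map_poly (tofrac \o polyC : {rmorphism K -> RF K}) q).[t^-1].
Proof. by []. Qed.

Lemma emb1X : emb1 ('X : {poly K}) = t^-1.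
Proof. by rewrite emb1E map_polyX hornerX. Qed.

Lemma emb1C (c : K) : emb1 c%:P = emb0 c%:P.
Proof. by rewrite emb1E map_polyC hornerC. Qed.

Definition revp N (q : {poly K}) : {poly K} := \poly_(j < N.+1) q`_(N - j).

Lemma revp0 N : revp N 0 = 0.
Proof. by apply/polyP => j; rewrite coef_poly !coef0 if_same. Qed.

Lemma revpK N q : (size q <= N.+1)%N -> revp N (revp N q) = q.
Proof.
move=> le_qN; apply/polyP => j; rewrite coef_poly.
case: ltnP => [lt_jN | le_Nj]; last by rewrite nth_default // (leq_trans le_qN).
by rewrite coef_poly ltnS leq_subr subKn // -ltnS.
Qed.

Lemma size_revp N q : (size (revp N q) <= N.+1)%N.
Proof. exact: size_poly. Qed.

Lemma emb1_mulXn N q : (size q <= N.+1)%N -> emb1 q * t ^+ N = emb0 (revp N q).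
Proof.
move=> le_qN.
rewrite emb1E (horner_coef_wide _ (n := N.+1)) ?size_map_poly //.
rewrite /revp poly_def rmorph_sum mulr_suml (reindex_inj rev_ord_inj) /=.
apply: eq_bigr => i _; rewrite coef_map /= subSS -mul_polyC rmorphM rmorphXn /=.
have ->: t ^+ N = t ^+ (N - i) * t ^+ i by rewrite -exprD subnK // -ltnS.
by rewrite exprVn mulrA divfK ?tvarXn_neq0.
Qed.

Lemma emb1_eq0 q : (emb1 q == 0) = (q == 0).
Proof.
apply/eqP/eqP => [q0 | ->]; last by rewrite rmorph0.
have := emb1_mulXn (leqnSn (size q)).
rewrite q0 mul0r => /esym/eqP; rewrite emb0_eq0 => /eqP rq0.
by rewrite -(revpK (leqnSn (size q))) rq0 revp0.
Qed.

End Chart.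

Section Laurent.
Variable K : fieldType.
Implicit Types (p q : {poly K}) (f h : RF K).

Lemma laurent_emb0 p : laurent (emb0 p).
Proof. by exists p, 0%N; rewrite expr0 divr1. Qed.

Lemma laurentD f h : laurent f -> laurent h -> laurent (f + h).
Proof.
move=> [p [a ->]] [q [b ->]]; exists (p * 'X^b + q * 'X^a), (a + b)%N.
by rewrite addf_div ?tvarXn_neq0 // rmorphD !rmorphM !rmorphXn exprD.
Qed.

Lemma laurentM f h : laurent f -> laurent h -> laurent (f * h).
Proof.
move=> [p [a ->]] [q [b ->]]; exists (p * q), (a + b)%N.
by rewrite mulf_div rmorphM exprD.
Qed.

Lemma laurent_sum (I : finType) (F : I -> RF K) :
  (forall i, laurent (F i)) -> laurent (\sum_i F i).
Proof.
move=> lF; elim/big_ind: _ => //; [|exact: laurentD].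
by rewrite -(rmorph0 (@emb0 K)); exact: laurent_emb0.
Qed.

(* If (t - c) f is regular at infinity, so is f, and f vanishes there: compare
   degrees after clearing the denominators t^n and t^(size q). *)
Lemma laurent_emb1_divXsubC (c : K) q f :
  laurent f -> emb0 ('X - c%:P) * f = emb1 q ->
  exists2 q', f = emb1 q' & q'.[0] = 0.
Proof.
case=> p [n ->]; rewrite -[p%:F]/(emb0 p) => eq_q.
have [-> | p_neq0] := eqVneq p 0.
  by exists 0; rewrite ?rmorph0 ?mul0r ?horner0.
pose N := size q.
have eq_pq : ('X - c%:P) * p * 'X^N = revp N q * 'X^n.
  apply: emb0_inj; rewrite !rmorphM !rmorphXn /= emb0X -emb1_mulXn // -eq_q.
  by rewrite [RHS]mulrAC -(mulrA _ (emb0 p / _)) divfK ?tvarXn_neq0.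
have le_pn : (size p <= n)%N.
  have XsubC_neq0 : 'X - c%:P != 0 by rewrite polyXsubC_eq0.
  have Xn_neq0 : 'X^N != 0 :> {poly K} by rewrite monic_neq0 ?monicXn.
  have := size_polyMleq (revp N q) 'X^n; rewrite -eq_pq.
  rewrite !size_mul ?mulf_neq0 // size_XsubC !size_polyXn.
  have := size_revp N q; rewrite natn !addnS !addSn /=.
  by move: (size p) (size (revp N q)) => sp sr; lia.
exists (revp n p); last by rewrite horner_coef0 coef_poly subn0 nth_default.
apply: (mulIf (tvarXn_neq0 K n)).
by rewrite emb1_mulXn ?size_revp // revpK ?(leq_trans le_pn) // divfK ?tvarXn_neq0.
Qed.

End Laurent.

Section ColumnSize.
Variable K : fieldType.

Definition size_cV r (s : 'cV[{poly K}]_r) : nat := \sum_l size (s l 0%R).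

Lemma ltn_size_mul (q d : {poly K}) :
  q != 0 -> (1 < size d)%N -> (size q < size (q * d)%R)%N.
Proof.
move=> q_neq0 d_gt1; have d_neq0 : d != 0 by rewrite -size_poly_gt0 ltnW.
rewrite size_mul //; case: (size d) d_gt1 => [|[|sd]] // _.
by rewrite !addnS /= ltnS leq_addr.
Qed.

Lemma size_cV_mul r (d : {poly K}) (s : 'cV_r) : (1 < size d)%N -> s != 0 ->
  (size_cV s < size_cV (map_mx ( *%R^~ d) s))%N.
Proof.
move=> d_gt1 /matrix0Pn[l [j]]; rewrite (ord1 j) => s_l_neq0.
rewrite /size_cV (bigD1 l) //= [X in (_ < X)%N](bigD1 l) //= -addSn mxE.
rewrite leq_add ?ltn_size_mul //; apply: leq_sum => i _; rewrite mxE.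
by have [-> | /ltn_size_mul/(_ d_gt1)/ltnW] := eqVneq (s i 0) 0; rewrite ?mul0r.
Qed.

End ColumnSize.

Section ColumnFactor.
Variables (K : fieldType) (r : nat).
Implicit Types (s t : 'cV[{poly K}]_r).

Lemma map_mx_mulr0 (d : {poly K}) : map_mx ( *%R^~ d) (0 : 'cV_r) = 0.
Proof. by apply/matrixP => i j; rewrite !mxE mul0r. Qed.

Lemma cV_factor_theorem (c : K) s : map_mx (horner^~ c) s = 0 ->
  exists t, s = map_mx ( *%R^~ ('X - c%:P)) t.
Proof.
move=> /matrixP s_c; exists (map_mx (fun q => q %/ ('X - c%:P)) s).
apply/matrixP => i j; rewrite !mxE divpK // dvdp_XsubCl.
by have := s_c i j; rewrite !mxE => /eqP.
Qed.

Lemma map_mx_eq0_inj (R S : nmodType) (f : {additive R -> S}) m n (A : 'M[R]_(m, n)) :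
  (forall x, (f x == 0) = (x == 0)) -> (map_mx f A == 0) = (A == 0).
Proof.
move=> f_eq0; apply/eqP/eqP => [/matrixP fA0 | ->]; last exact: map_mx0.
by apply/matrixP => i j; apply/eqP; have := fA0 i j; rewrite !mxE -f_eq0 => ->.
Qed.

Lemma cV_laurent_emb1_divXsubC (c : K) (v : 'cV[RF K]_r) s :
  (forall l, laurent (v l 0)) -> emb0 ('X - c%:P) *: v = map_mx (@emb1 K) s ->
  exists2 s', v = map_mx (@emb1 K) s' & map_mx (horner^~ 0) s' = 0.
Proof.
move=> v_laurent /matrixP v_s; have /fin_all_exists2[q vq q0] : forall l,
    exists2 q, v l 0 = emb1 q & q.[0] = 0.
  by move=> l; have := v_s l 0; rewrite !mxE; exact: laurent_emb1_divXsubC.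
by exists (\col_l q l); apply/matrixP => l j; rewrite (ord1 j) !mxE ?vq ?q0.
Qed.

End ColumnFactor.

Section Sections.
Variables (K : fieldType) (E : bundle K).
Local Notation r := (rk E).
Local Notation g := (trans E).
Local Notation t := (tvar K).
Implicit Types (s a b : 'cV[{poly K}]_r).

Lemma is_section_emb1 s0 s1 :
  is_section s0 s1 -> map_mx (@emb1 K) s1 = invmx g *m map_mx (@emb0 K) s0.
Proof. by move=> ->; rewrite mulKmx // trans_unit. Qed.

Lemma section_eq0 s0 s1 : is_section s0 s1 -> (s0 == 0) = (s1 == 0).
Proof.
move=> sec; rewrite -(map_mx_eq0_inj _ (@emb0_eq0 K)) sec.
rewrite -(map_mx_eq0_inj _ (@emb1_eq0 K)).
apply/eqP/eqP => [g_s1_0 | ->]; last exact: mulmx0.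
by rewrite -(mulKmx (trans_unit E) (map_mx (@emb1 K) s1)) g_s1_0 mulmx0.
Qed.

Lemma is_sectionB a0 a1 b0 b1 :
  is_section a0 a1 -> is_section b0 b1 -> is_section (a0 - b0) (a1 - b1).
Proof. by rewrite /is_section !map_mxB => -> ->; rewrite mulmxBr. Qed.

Lemma fibre_evalB p a0 a1 b0 b1 :
  fibre_eval p (a0 - b0) (a1 - b1) = fibre_eval p a0 a1 - fibre_eval p b0 b1.
Proof. by case: p => [c|]; apply/matrixP => i j; rewrite !mxE hornerD hornerN. Qed.

Lemma laurent_invmx_trans s0 l : laurent ((invmx g *m map_mx (@emb0 K) s0) l 0).
Proof.
rewrite mxE; apply: laurent_sum => j; rewrite mxE.
by apply: laurentM; [exact: trans_inv_laurent | exact: laurent_emb0].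
Qed.

Definition killed_by (P : nat -> option K) (phi : nat -> 'rV[K]_r) (n : nat) s0 s1 :=
  forall i, (i < n)%N -> (phi i *m fibre_eval (P i) s0 s1) 0 0 = 0.

Lemma killed_byB P phi n a0 a1 b0 b1 :
  (forall i, (i < n)%N ->
     (phi i *m fibre_eval (P i) a0 a1) 0 0 = (phi i *m fibre_eval (P i) b0 b1) 0 0) ->
  killed_by P phi n (a0 - b0) (a1 - b1).
Proof. by move=> eq_ab i /eq_ab; rewrite fibre_evalB mulmxBr !mxE => ->; rewrite subrr. Qed.

Lemma section_divXsubC (c : K) P phi n s0 s1 :
  (forall i, (i < n)%N -> P i <> Some c) ->
  is_section s0 s1 -> killed_by P phi n s0 s1 -> fibre_eval (Some c) s0 s1 = 0 ->
  exists t0 t1, [/\ is_section t0 t1, killed_by P phi n t0 t1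
                  & s0 = map_mx ( *%R^~ ('X - c%:P)) t0].
Proof.
move=> P_neq sec killed /cV_factor_theorem[t0 s0E].
have emb1_s1 : map_mx (@emb1 K) s1 =
    emb0 ('X - c%:P) *: (invmx g *m map_mx (@emb0 K) t0).
  rewrite (is_section_emb1 sec) scalemxAr; congr (_ *m _).
  by apply/matrixP => l j; rewrite s0E !mxE rmorphM mulrC.
have [t1 emb1_t1 t1_inf] :=
  cV_laurent_emb1_divXsubC (laurent_invmx_trans t0) (esym emb1_s1).
exists t0, t1; split => //; first by rewrite /is_section -emb1_t1 mulKVmx // trans_unit.
move=> i lt_in; have := killed i lt_in; have := P_neq i lt_in.
case: (P i) => [ci|] /= ci_neq; last by move=> _; rewrite t1_inf mulmx0 mxE.
have -> : map_mx (horner^~ ci) s0 = (ci - c) *: map_mx (horner^~ ci) t0.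
  by apply/matrixP => l j; rewrite s0E !mxE hornerM hornerXsubC mulrC.
rewrite -scalemxAr mxE => /eqP; rewrite mulf_eq0 subr_eq0 => /orP[/eqP ci_c|/eqP //].
by case: ci_neq; rewrite ci_c.
Qed.

Lemma section_divX P phi n s0 s1 :
  (forall i, (i < n)%N -> P i <> None) ->
  is_section s0 s1 -> killed_by P phi n s0 s1 -> fibre_eval None s0 s1 = 0 ->
  exists t0 t1, [/\ is_section t0 t1, killed_by P phi n t0 t1
                  & s1 = map_mx ( *%R^~ 'X) t1].
Proof.
move=> P_neq sec killed /cV_factor_theorem[t1]; rewrite polyC0 subr0 => s1E.
exists (map_mx ( *%R^~ 'X) s0), t1; split => //.
  rewrite /is_section.
  have -> : map_mx (@emb0 K) (map_mx ( *%R^~ 'X) s0) = t *: map_mx (@emb0 K) s0.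
    by apply/matrixP => l j; rewrite !mxE rmorphM mulrC.
  rewrite sec; have -> : map_mx (@emb1 K) s1 = t^-1 *: map_mx (@emb1 K) t1.
    by apply/matrixP => l j; rewrite s1E !mxE rmorphM /= emb1X mulrC.
  by rewrite -scalemxAr scalerA mulfV ?tvar_neq0 ?scale1r.
move=> i lt_in; have := killed i lt_in; have := P_neq i lt_in.
case: (P i) => [ci|] //= _ killed_i.
have -> : map_mx (horner^~ ci) (map_mx ( *%R^~ 'X) s0) = ci *: map_mx (horner^~ ci) s0.
  by apply/matrixP => l j; rewrite !mxE hornerMX mulrC.
by rewrite -scalemxAr mxE killed_i mulr0.
Qed.

Definition size_at (p : option K) s0 s1 : nat :=
  if p is Some _ then size_cV s0 else size_cV s1.

(* Multiply by 1/(t - c), resp. t, which has its only pole at p and a zero at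
   infinity, resp. 0: the conditions at the other points are rescaled or hold
   trivially. *)
Lemma section_div_at p P phi n s0 s1 :
  (forall i, (i < n)%N -> P i <> p) ->
  is_section s0 s1 -> killed_by P phi n s0 s1 -> s0 != 0 -> fibre_eval p s0 s1 = 0 ->
  exists t0 t1, [/\ is_section t0 t1, killed_by P phi n t0 t1, t0 != 0
                  & (size_at p t0 t1 < size_at p s0 s1)%N].
Proof.
case: p => [c|] P_neq sec killed s0_neq0 vanish.
  have [t0 [t1 [sec_t killed_t s0E]]] := section_divXsubC P_neq sec killed vanish.
  have t0_neq0 : t0 != 0 by apply: contraNneq s0_neq0 => t0_0; rewrite s0E t0_0 map_mx_mulr0.
  by exists t0, t1; split; rewrite //= s0E size_cV_mul // size_XsubC.
have [t0 [t1 [sec_t killed_t s1E]]] := section_divX P_neq sec killed vanish.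
have t1_neq0 : t1 != 0.
  by apply: contraNneq s0_neq0 => t1_0; rewrite (section_eq0 sec) s1E t1_0 map_mx_mulr0.
exists t0, t1; split; rewrite /= ?s1E ?size_cV_mul ?size_polyX //.
by rewrite (section_eq0 sec_t).
Qed.

Lemma section_nonvanishing_at p P phi n s0 s1 :
  (forall i, (i < n)%N -> P i <> p) ->
  is_section s0 s1 -> killed_by P phi n s0 s1 -> s0 != 0 ->
  exists t0 t1, [/\ is_section t0 t1, killed_by P phi n t0 t1
                  & fibre_eval p t0 t1 != 0].
Proof.
move=> P_neq; have [N] := ubnP (size_at p s0 s1).
elim: N => // N IH in s0 s1 * => lt_sN sec killed s0_neq0.
have [vanish | ] := eqVneq (fibre_eval p s0 s1) 0; last by exists s0, s1.
have [t0 [t1 [sec_t killed_t t0_neq0 lt_ts]]] :=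
  section_div_at P_neq sec killed s0_neq0 vanish.
exact: IH (leq_trans lt_ts lt_sN) sec_t killed_t t0_neq0.
Qed.

End Sections.

Section TriangularFamily.
Variables (K : fieldType) (E : bundle K) (P : nat -> option K).
Local Notation r := (rk E).
Local Notation section_t := ('cV[{poly K}]_r * 'cV[{poly K}]_r)%type.
Implicit Types (phi : nat -> 'rV[K]_r) (S : nat -> section_t).

Definition triangular phi S k :=
  forall j, (j < k)%N -> [/\ is_section (S j).1 (S j).2,
    killed_by P phi j (S j).1 (S j).2 & (phi j *m fibre_eval (P j) (S j).1 (S j).2) 0 0 != 0].

Definition kills_only_zero phi k :=
  forall s0 s1 : 'cV_r, is_section s0 s1 -> killed_by P phi k s0 s1 -> s0 = 0 /\ s1 = 0.

Lemma eq_killed_by phi phi' n (s0 s1 : 'cV_r) :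
  (forall i, (i < n)%N -> phi i = phi' i) ->
  killed_by P phi n s0 s1 -> killed_by P phi' n s0 s1.
Proof. by move=> eq_phi killed i lt_in; rewrite -eq_phi ?killed. Qed.

Lemma triangular_extend phi S n :
  (forall i, (i < n)%N -> P i <> P n) ->
  triangular phi S n -> ~ kills_only_zero phi n ->
  exists phi' S', triangular phi' S' n.+1.
Proof.
move=> P_neq tri not_only0.
have [s0 [s1 [sec killed s0_neq0]]] :
    exists s0 s1, [/\ is_section s0 s1, killed_by P phi n s0 s1 & s0 != 0].
  apply: NNPP => none; apply: not_only0 => s0 s1 sec killed.
  have s0_0 : s0 = 0 by apply/eqP/negPn/negP => s0_neq0; apply: none; exists s0, s1.
  by split => //; apply/eqP; rewrite -(section_eq0 sec) s0_0.
have [t0 [t1 [sec_t killed_t /matrix0Pn[l [j]]]]] :=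
  section_nonvanishing_at P_neq sec killed s0_neq0.
rewrite (ord1 j) => t_l_neq0.
exists (fun i => if i == n then 'e_l else phi i).
exists (fun i => if i == n then (t0, t1) else S i).
move=> j'; rewrite ltnS leq_eqVlt => /predU1P[-> | lt_jn].
  rewrite eqxx -rowE mxE; split => //.
  by apply: eq_killed_by killed_t => i lt_in; rewrite ltn_eqF.
have [sec_j killed_j nz_j] := tri j' lt_jn; rewrite ltn_eqF //; split => //.
by apply: eq_killed_by killed_j => i lt_ij; rewrite ltn_eqF // (ltn_trans lt_ij).
Qed.

Lemma triangular_family_exists m :
  (forall i j, (i < m)%N -> (j < m)%N -> P i = P j -> i = j) ->
  exists k phi S, [/\ (k <= m)%N, triangular phi S k & k = m \/ kills_only_zero phi k].
Proof.
move=> P_inj; suff: forall n, (n <= m)%N -> exists k phi S,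
    [/\ (k <= n)%N, triangular phi S k & k = n \/ kills_only_zero phi k] by apply.
elim=> [_ | n IH le_nm]; first by exists 0%N, (fun=> 0), (fun=> (0, 0)); split; last left.
have [k [phi [S [le_kn tri [k_n | only0]]]]] := IH (ltnW le_nm); last first.
  by exists k, phi, S; split; [exact: leqW | | right].
subst k.
have [only0 | not_only0] := classic (kills_only_zero phi n).
  by exists n, phi, S; split; [exact: leqW | | right].
have P_neq i : (i < n)%N -> P i <> P n.
  move=> lt_in /P_inj eq_in; move: (lt_in); rewrite eq_in ?ltnn //.
  exact: ltn_trans lt_in le_nm.
have [phi' [S' tri']] := triangular_extend P_neq tri not_only0.
by exists n.+1, phi', S'; split => //; left.
Qed.

End TriangularFamily.

Section Span.
Variables (K : fieldType) (E : bundle K) (k : nat).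
Variable S : nat -> 'cV[{poly K}]_(rk E) * 'cV[{poly K}]_(rk E).
Local Notation r := (rk E).
Local Notation g := (trans E).

Definition sections_mx0 : 'M[{poly K}]_(r, k) := \matrix_(l, j) (S j).1 l 0.
Definition sections_mx1 : 'M[{poly K}]_(r, k) := \matrix_(l, j) (S j).2 l 0.
Definition lincomb0 (x : 'cV[K]_k) := sections_mx0 *m map_mx polyC x.
Definition lincomb1 (x : 'cV[K]_k) := sections_mx1 *m map_mx polyC x.

Lemma is_section_lincomb x :
  (forall j, (j < k)%N -> is_section (S j).1 (S j).2) ->
  is_section (lincomb0 x) (lincomb1 x).
Proof.
move=> secS; rewrite /is_section /lincomb0 /lincomb1 !map_mxM mulmxA.
have -> : map_mx (@emb0 K) sections_mx0 = g *m map_mx (@emb1 K) sections_mx1.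
  apply/matrixP => a j; have /matrixP/(_ a 0) := secS j (ltn_ord j).
  by rewrite !mxE => ->; apply: eq_bigr => b _; rewrite !mxE.
by congr (_ *m _); apply/matrixP => a b; rewrite !mxE /= emb1C.
Qed.

Definition fibre_mx (p : option K) : 'M[K]_(r, k) :=
  \matrix_(l, j) fibre_eval p (S j).1 (S j).2 l 0.

Lemma fibre_eval_lincomb p x :
  fibre_eval p (lincomb0 x) (lincomb1 x) = fibre_mx p *m x.
Proof.
by case: p => [c|]; apply/matrixP => l j; rewrite !mxE horner_sum;
  apply: eq_bigr => i _; rewrite !mxE hornerM hornerC.
Qed.

Definition cond_mx (v : 'I_k -> 'rV[K]_r) (p : 'I_k -> option K) : 'M[K]_k :=
  \matrix_(i, j) (v i *m fibre_eval (p i) (S j).1 (S j).2) 0 0.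

Lemma cond_mx_lincomb v p x i :
  (cond_mx v p *m x) i 0 = (v i *m fibre_eval (p i) (lincomb0 x) (lincomb1 x)) 0 0.
Proof.
rewrite fibre_eval_lincomb mulmxA !mxE; apply: eq_bigr => j _; rewrite !mxE.
by congr (_ * _); apply: eq_bigr => l _; rewrite !mxE.
Qed.

Lemma cond_mx_unit P phi :
  triangular P phi S k -> cond_mx (fun i => phi i) (fun i => P i) \in unitmx.
Proof.
move=> tri; rewrite unitmxE unitfE det_trig; last first.
  apply/is_trig_mxP => i j lt_ij; rewrite mxE.
  by have [_ killed _] := tri j (ltn_ord j); exact: killed.
by apply/prodf_neq0 => i _; rewrite mxE; have [] := tri i (ltn_ord i).
Qed.

(* Invert the triangular matrix of conditions to match the values of a given
   section at the first k conditions; the difference is then killed. *)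
Lemma triangular_span P phi :
  triangular P phi S k -> kills_only_zero P phi k ->
  forall s0 s1, is_section s0 s1 -> exists x, s0 = lincomb0 x /\ s1 = lincomb1 x.
Proof.
move=> tri only0 s0 s1 sec.
have secS j : (j < k)%N -> is_section (S j).1 (S j).2 by case/tri.
pose T := cond_mx (fun i => phi i) (fun i => P i).
pose y := \col_(i < k) (phi i *m fibre_eval (P i) s0 s1) 0 0.
exists (invmx T *m y).
have [] := only0 _ _ (is_sectionB sec (is_section_lincomb (invmx T *m y) secS)).
  apply: killed_byB => i lt_ik.
  have := cond_mx_lincomb (fun i => phi i) (fun i => P i) (invmx T *m y) (Ordinal lt_ik).
  by rewrite mulKVmx ?cond_mx_unit // mxE.
by move=> /eqP; rewrite subr_eq0 => /eqP -> /eqP; rewrite subr_eq0 => /eqP ->.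
Qed.

Section MaxRank.
Variables (m : nat) (ps : m.-tuple (option K)) (le_km : (k <= m)%N).

Definition quot_sqmx (Phi : 'M[K]_(m, r)) : 'M[K]_k :=
  cond_mx (fun i => row (widen_ord le_km i) Phi) (fun i => tnth ps (widen_ord le_km i)).

Lemma quot_map_lincomb Phi x i :
  quot_map ps Phi (lincomb0 x) (lincomb1 x) (widen_ord le_km i) 0 = (quot_sqmx Phi *m x) i 0.
Proof. by rewrite cond_mx_lincomb mxE. Qed.

Lemma quot_mapB Phi (a0 a1 b0 b1 : 'cV_r) :
  quot_map ps Phi (a0 - b0) (a1 - b1) = quot_map ps Phi a0 a1 - quot_map ps Phi b0 b1.
Proof.
apply/matrixP => i j; rewrite !mxE fibre_evalB -sumrB.
by apply: eq_bigr => l _; rewrite !mxE mulrBr.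
Qed.

Lemma quot_sqmx_rows (phi : nat -> 'rV[K]_r) :
  quot_sqmx (\matrix_(i, l) phi i 0 l) = cond_mx (fun i => phi i) (fun i => nth None ps i).
Proof.
apply/matrixP => i j; rewrite !mxE (tnth_nth None).
by apply: eq_bigr => l _; rewrite !mxE.
Qed.

Lemma quot_sqmx_det_mpoly :
  exists F : {mpoly K[m * r]}, forall Phi, F.@[fun j => mxvec Phi 0 j] = \det (quot_sqmx Phi).
Proof.
exists (\det (\matrix_(i, j) \sum_(l < r) 'X_(mxvec_index (widen_ord le_km i) l)
  * (fibre_eval (tnth ps (widen_ord le_km i)) (S j).1 (S j).2 l 0)%:MP)).
move=> Phi; rewrite -det_map_mx; congr (\det _); apply/matrixP => i j.
rewrite !mxE raddf_sum; apply: eq_bigr => l _.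
by rewrite !mxE /= mevalM mevalXU mevalC mxvecE.
Qed.

Lemma quot_map_surjective Phi :
  k = m -> (forall j, (j < k)%N -> is_section (S j).1 (S j).2) ->
  quot_sqmx Phi \in unitmx ->
  forall w, exists s0 s1, is_section s0 s1 /\ quot_map ps Phi s0 s1 = w.
Proof.
move=> k_m secS unitA w.
pose x := invmx (quot_sqmx Phi) *m \col_i w (widen_ord le_km i) 0.
exists (lincomb0 x), (lincomb1 x); split; first exact: is_section_lincomb.
apply/matrixP => i j; rewrite (ord1 j); have lt_ik : (i < k)%N by rewrite k_m.
have -> : i = widen_ord le_km (Ordinal lt_ik) by exact: val_inj.
by rewrite quot_map_lincomb mulKVmx // mxE.
Qed.

Lemma quot_map_injective Phi :
  (forall s0 s1, is_section s0 s1 -> exists x, s0 = lincomb0 x /\ s1 = lincomb1 x) ->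
  quot_sqmx Phi \in unitmx ->
  forall s0 s1 t0 t1, is_section s0 s1 -> is_section t0 t1 ->
    quot_map ps Phi s0 s1 = quot_map ps Phi t0 t1 -> s0 = t0 /\ s1 = t1.
Proof.
move=> span unitA s0 s1 t0 t1 sec_s sec_t eq_st.
have [x [d0 d1]] := span _ _ (is_sectionB sec_s sec_t).
have x0 : x = 0.
  rewrite -(mulKmx unitA x); suff -> : quot_sqmx Phi *m x = 0 by rewrite mulmx0.
  apply/matrixP => i j; rewrite (ord1 j) -quot_map_lincomb -d0 -d1 quot_mapB eq_st.
  by rewrite subrr !mxE.
move: d0 d1; rewrite x0 /lincomb0 /lincomb1 map_mx0 !mulmx0.
by move=> /eqP; rewrite subr_eq0 => /eqP -> /eqP; rewrite subr_eq0 => /eqP ->.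
Qed.

End MaxRank.
End Span.

Theorem mainTheorem5 (K : closedFieldType) (D : seq (option K)) (E : bundle K) :
  uniq D -> H1_vanishes E -> regular_rel E D.
Proof.
move=> _ H1E; split=> // m ps uniq_ps _.
pose P i := nth None ps i.
have P_inj i j : (i < m)%N -> (j < m)%N -> P i = P j -> i = j.
  by move=> lt_im lt_jm /eqP; rewrite nth_uniq ?size_tuple // => /eqP.
have [k [phi [S [le_km tri complete]]]] := triangular_family_exists E P_inj.
have [F F_det] := quot_sqmx_det_mpoly S ps le_km.
exists F; split.
  have := cond_mx_unit tri; rewrite unitmxE unitfE -quot_sqmx_rows -F_det.
  by apply: contraNneq => ->; rewrite meval0.
move=> Phi _; rewrite F_det -unitfE -unitmxE => unitA.
have secS j : (j < k)%N -> is_section (S j).1 (S j).2 by case/tri.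
case: complete => [k_m | only0]; first by right; exact: quot_map_surjective k_m secS unitA.
by left; apply: quot_map_injective unitA; exact: triangular_span tri only0.
Qed.
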